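(* Let $\mathcal{C}\subseteq\mathbb{F}_q^n$ be a linear code of length $n$ with covering radius $\rho$, and let $j$ be a positive integer with $j\le\rho$. Define $$\mathcal{Y}_j=\{\mathbf{y}\in\mathbb{F}_q^n : d(\mathbf{y},\mathcal{C})\ge\rho-j\},$$ $$\mathcal{E}_j=\{\mathbf{y}-\mathbf{c} : \mathbf{y}\in\mathcal{Y}_j,\ \mathbf{c}\in\mathcal{C},\ d(\mathbf{y},\mathbf{c})=d(\mathbf{y},\mathcal{C})\},$$ $$P_j=\bigcap_{\mathbf{e}\in\mathcal{E}_j}\mathrm{supp}(\mathbf{e}).$$ Let $\mathcal{C}_j'\subseteq\mathbb{F}_q^{n-|P_j|}$ be the code obtained by puncturing $\mathcal{C}$ at the positions of $P_j$. Then the covering radius $\rho_j'$ of $\mathcal{C}_j'$ satisfies $$\rho_j'\le\max\{\rho-j-1,\ \rho-|P_j|\}.$$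
   Context: $d$ denotes the Hamming distance and $d(\mathbf{y},\mathcal{C})=\min_{\mathbf{c}\in\mathcal{C}}d(\mathbf{y},\mathbf{c})$. The covering radius of a code $\mathcal{C}\subseteq\mathbb{F}_q^N$ is $\max_{\mathbf{y}\in\mathbb{F}_q^N}d(\mathbf{y},\mathcal{C})$. $\mathrm{supp}(\mathbf{e})$ is the set of coordinates where $\mathbf{e}$ is nonzero. Puncturing $\mathcal{C}$ at a set of positions $P$ means deleting the coordinates indexed by $P$ from every codeword, giving the code $\pi_{\{1,\dots,n\}\setminus P}(\mathcal{C})\subseteq\mathbb{F}_q^{n-|P|}$. *)

From HB Require Import structures.
From mathcomp Require Import all_boot all_order all_algebra.
Set Implicit Arguments. Unset Strict Implicit. Unset Printing Implicit Defensive.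
Import Order.TTheory GRing.Theory Num.Theory.

Definition ham (F : finFieldType) (m : nat) (x y : 'rV[F]_m) : nat :=
  #|[set i : 'I_m | x ord0 i != y ord0 i]|.

(* d(y, C) = min_{c in C} d(y, c) for a code C given as a set of words
   (default value m, the length, if C is empty). *)
Definition dist_code (F : finFieldType) (m : nat) (C : {set 'rV[F]_m})
  (y : 'rV[F]_m) : nat :=
  \big[minn/m]_(c in C) ham y c.

Definition covrad (F : finFieldType) (m : nat) (C : {set 'rV[F]_m}) : nat :=
  \max_(y : 'rV[F]_m) dist_code C y.

Definition supp (F : finFieldType) (m : nat) (e : 'rV[F]_m) : {set 'I_m} :=
  [set i | e ord0 i != 0%R].

Definition codewords (F : finFieldType) (n : nat) (C : {vspace 'rV[F]_n})
  : {set 'rV[F]_n} := [set c | c \in C].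

(* Projection onto the coordinates outside P (kept in increasing order),
   i.e. deletion of the coordinates in P. *)
Definition proj_out (F : finFieldType) (n : nat) (P : {set 'I_n})
  (y : 'rV[F]_n) : 'rV[F]_#|~: P| :=
  \row_(k < #|~: P|) y ord0 (enum_val k).

(* Puncturing C at P: a code in F^(n - |P|) (note #|~: P| = n - #|P|). *)
Definition puncture (F : finFieldType) (n : nat) (C : {set 'rV[F]_n})
  (P : {set 'I_n}) : {set 'rV[F]_#|~: P|} :=
  [set proj_out P c | c in C].

Definition Yset (F : finFieldType) (n : nat) (C : {set 'rV[F]_n}) (j : nat)
  : {set 'rV[F]_n} :=
  [set y | covrad C - j <= dist_code C y].

Definition Eset (F : finFieldType) (n : nat) (C : {set 'rV[F]_n}) (j : nat)
  : {set 'rV[F]_n} :=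
  [set e | [exists y in Yset C j, exists c in C,
             (ham y c == dist_code C y) && (e == y - c)%R]].

Definition Pset (F : finFieldType) (n : nat) (C : {set 'rV[F]_n}) (j : nat)
  : {set 'I_n} :=
  \bigcap_(e in Eset C j) supp e.

From HB Require Import structures.
From mathcomp Require Import all_boot all_order all_algebra.
From mathcomp Require Import zify.
Import Order.TTheory GRing.Theory Num.Theory.

(* Write C' for C punctured at P = P_j and let z be any word of
   the punctured space.  Lift z to a word y of F^n (zero on P) and pick a
   codeword c nearest to y.  The Hamming distance d(y,c) splits as the
   distance of the projections outside P plus the number of disagreements
   inside P.
   - If d(y,C) >= rho - j, then y - c lies in E_j, so P is contained in
     supp(y - c): y and c disagree on all of P, hence
     d(z,C') + |P| <= d(y,c) = d(y,C) <= rho.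
   - Otherwise d(z,C') <= d(y,c) = d(y,C) <= rho - j - 1.
   The file first proves basic facts on the distance to a code, on the
   splitting of the Hamming distance under puncturing and on lifting
   punctured words; the pointwise bound [punctured_dist_bound] then gives
   the theorem by evaluating it at a word realizing the covering radius.
   Linearity of C is only used to know that C is nonempty (0 is a codeword). *)

Section DistanceToCode.
Context {F : finFieldType} {m : nat}.
Implicit Types (C : {set 'rV[F]_m}) (x y c : 'rV[F]_m).

Lemma ham_le_length x y : (ham x y <= m)%N.
Proof. by rewrite /ham (leq_trans (max_card _)) ?card_ord. Qed.

Lemma dist_code_le C y c : c \in C -> (dist_code C y <= ham y c)%N.
Proof.
move=> cC; rewrite /dist_code -big_filter.
have : c \in [seq c' <- index_enum _ | c' \in C].
  by rewrite mem_filter cC mem_index_enum.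
elim: [seq _ <- _ | _] => [//|a s IH]; rewrite in_cons big_cons.
case/orP => [/eqP -> | /IH le_s]; first exact: geq_minl.
exact: leq_trans (geq_minr _ _) le_s.
Qed.

Lemma dist_code_attained C y {c0} : c0 \in C ->
  exists2 c, c \in C & dist_code C y = ham y c.
Proof.
move=> c0C.
have : (dist_code C y == m) || [exists c in C, dist_code C y == ham y c].
  rewrite /dist_code.
  apply: (big_ind (fun d => (d == m) || [exists c in C, d == ham y c])).
  - by rewrite eqxx.
  - by move=> a b ha hb; rewrite /minn; case: ltnP.
  - by move=> c cC; apply/orP; right; apply/existsP; exists c; rewrite cC eqxx.
case/orP => [/eqP dm | /existsP [c /andP [cC /eqP ->]]]; last by exists c.
by exists c0 => //; apply/eqP; rewrite eqn_leq dist_code_le // dm ham_le_length.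
Qed.

Lemma dist_code_le_covrad C y : (dist_code C y <= covrad C)%N.
Proof. exact: (@leq_bigmax _ (fun y => dist_code C y)). Qed.

Lemma covrad_attained C : exists y, covrad C = dist_code C y.
Proof. by rewrite /covrad (bigop.bigmax_eq_arg 0%R) //; eexists. Qed.

End DistanceToCode.

Section Puncturing.
Context {F : finFieldType} {n : nat}.
Implicit Types (P : {set 'I_n}) (y c : 'rV[F]_n).

Definition disagree y c : {set 'I_n} := [set i | y ord0 i != c ord0 i].

Lemma ham_proj_out P y c :
  ham (proj_out P y) (proj_out P c) = #|disagree y c :&: ~: P|.
Proof.
rewrite /ham -(card_imset _ enum_val_inj); apply: eq_card => i.
rewrite in_setI in_set; case: (boolP (i \in ~: P)) => iP.
- rewrite andbT; apply/imsetP/idP.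
  + by case=> k; rewrite in_set !mxE => dk ->.
  + move=> di; exists (enum_rank_in iP i); last by rewrite enum_rankK_in.
    by rewrite in_set !mxE enum_rankK_in.
- by rewrite andbF; apply/imsetP => -[k _ ik]; rewrite ik enum_valP in iP.
Qed.

Lemma ham_split P y c :
  ham y c = (ham (proj_out P y) (proj_out P c) + #|disagree y c :&: P|)%N.
Proof. by rewrite ham_proj_out /ham /disagree -[LHS](cardsID (~: P)) setDE setCK. Qed.

Lemma proj_out_onto P (z : 'rV[F]_#|~: P|) : exists y, proj_out P y = z.
Proof.
exists (\row_(i < n) (if [pick k | enum_val k == i] is Some k then z ord0 k else 0))%R.
apply/rowP => k; rewrite !mxE.
by case: pickP => [k' /eqP /enum_val_inj -> // | /(_ k)]; rewrite eqxx.
Qed.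

Lemma dist_code_puncture_le (C : {set 'rV[F]_n}) P y {c} : c \in C ->
  (dist_code (puncture C P) (proj_out P y) <= ham y c)%N.
Proof.
move=> cC; rewrite (ham_split P) (leq_trans _ (leq_addr _ _)) //.
by apply: dist_code_le; apply: imset_f.
Qed.

End Puncturing.

Section CommonSupport.
Context {F : finFieldType} {n : nat} (C : {set 'rV[F]_n}) (j : nat).
Local Notation rho := (covrad C).
Local Notation P := (Pset C j).

(* A word y of Y_j and a nearest codeword c disagree everywhere on P_j,
   because y - c is one of the error patterns of E_j. *)
Lemma Pset_sub_disagree {y c} : y \in Yset C j -> c \in C ->
  ham y c = dist_code C y -> P \subset disagree y c.
Proof.
move=> yY cC near.
have yc_E : (y - c)%R \in Eset C j.
  rewrite in_set; apply/existsP; exists y; rewrite yY /=.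
  by apply/existsP; exists c; rewrite cC near !eqxx.
apply/subsetP => i /(subsetP (bigcap_inf _ yc_E)).
by rewrite !in_set !mxE subr_eq0.
Qed.

Lemma punctured_dist_bound {c0 : 'rV[F]_n} (z : 'rV[F]_#|~: P|) :
  c0 \in C ->
  (dist_code (puncture C P) z + j + 1 <= rho)%N
  || (dist_code (puncture C P) z + #|P| <= rho)%N.
Proof.
move=> c0C; have [y <-] := proj_out_onto P z.
have [c cC near] := dist_code_attained C y c0C.
have le_rho : (dist_code C y <= rho)%N := dist_code_le_covrad C y.
have le_near := dist_code_puncture_le C P y cC.
case: (leqP (rho - j) (dist_code C y)) => [far | close].
- apply/orP; right.
  have yY : y \in Yset C j by rewrite in_set.
  have /setIidPr inP := Pset_sub_disagree yY cC (esym near).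
  move: (ham_split P y c); rewrite inP -near => split_yc.
  rewrite (leq_trans _ le_rho) // split_yc leq_add2r.
  exact: dist_code_le (imset_f _ cC).
- by apply/orP; left; lia.
Qed.

End CommonSupport.

Local Open Scope ring_scope.

Theorem proposition2 (F : finFieldType) (n : nat) (C : {vspace 'rV[F]_n})
  (j : nat) (hj0 : (0 < j)%N) (hjrho : (j <= covrad (codewords C))%N) :
  let rho := covrad (codewords C) in
  let P := Pset (codewords C) j in
  ((covrad (puncture (codewords C) P))%:Z : int)
    <= Num.max (rho%:Z - j%:Z - 1) (rho%:Z - (#|P|)%:Z).
Proof.
cbv zeta.
have zero_code : 0 \in codewords C by rewrite in_set mem0v.
have [z ->] := covrad_attained (puncture (codewords C) (Pset (codewords C) j)).
have := punctured_dist_bound (codewords C) j z zero_code.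
by rewrite le_max => /orP [h | h]; apply/orP; [left | right]; lia.
Qed.
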